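(* Let $\rho$ be the real number (with $\rho\in(0.6543,0.6632)$) such that \[ \int_0^1\prod_{0\leq k<\lambda}\left|\sin(2^k\pi\theta)\right|\,d\theta\asymp\rho^\lambda \] for all integers $\lambda\geq 0$. Then, uniformly for real $z\geq 1$, \[ \int_0^1\sup_{x\geq 0}\left|\sum_{x<m\leq x+z}(-1)^{s_2(m)}e(m\theta)\right|\,d\theta\ll z^{1+\frac{\log\rho}{\log 2}}. \]
   Context: $s_2(m)$ denotes the sum of the binary digits of the nonnegative integer $m$; $e(x)=e^{2\pi i x}$; the sum ranges over integers $m$ in $(x,x+z]$. The existence of $\rho$ with the stated property and bounds is a known result of Fouvry and Mauduit; $A\asymp B$ means $A\ll B$ and $B\ll A$ with constants independent of $\lambda$, and $\ll$ has an absolute implied constant independent of $z$. *)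

From HB Require Import structures.
From mathcomp Require Import all_boot all_order all_algebra.
From mathcomp Require Import all_classical all_reals all_analysis.
From mathcomp Require Import complex.
Set Implicit Arguments. Unset Strict Implicit. Unset Printing Implicit Defensive.
Import Order.TTheory GRing.Theory Num.Theory.
Local Open Scope ring_scope.

(* s_2(m): sum of the binary digits of m. The i-th binary digit of m is
   (m %/ 2^i) %% 2, and all digits of index >= m.+1 vanish since m < 2^(m.+1). *)
Definition s2 (m : nat) : nat := (\sum_(i < m.+1) ((m %/ 2 ^ i) %% 2))%N.

Definition e_ (R : realType) (t : R) : R[i] :=
  Complex (cos (2 * pi * t)) (sin (2 * pi * t)).

(* sum_{x < m <= x + z} (-1)^{s_2(m)} e(m theta), for x >= 0 (so m ranges over
   naturals, all of which are <= truncn (x + z)). *)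
Definition Thue_Morse_sum (R : realType) (theta x z : R) : R[i] :=
  \sum_(m < (Num.truncn (x + z)).+1 | (x < m%:R) && (m%:R <= x + z))
     ((-1) ^+ s2 m * e_ (m%:R * theta)).

Definition cmod (R : realType) (w : R[i]) : R := Normc.normc w.

Definition sup_abs_sum (R : realType) (z theta : R) : \bar R :=
  ereal_sup [set (cmod (Thue_Morse_sum theta x z))%:E | x in [set x : R | 0 <= x]].

Definition sin_prod (R : realType) (lambda : nat) (theta : R) : R :=
  \prod_(k < lambda) `|sin (2 ^+ k * pi * theta)|.

From HB Require Import structures.
From mathcomp Require Import all_boot all_order all_algebra.
From mathcomp Require Import all_classical all_reals all_analysis.
From mathcomp Require Import complex measurable_realfun.
From mathcomp Require Import zify ring lra.
Set Implicit Arguments. Unset Strict Implicit. Unset Printing Implicit Defensive.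
Import Order.TTheory GRing.Theory Num.Theory.

(* Write T_theta(a, b) for the sum of (-1)^{s_2(m)} e(m theta) over a <= m < b.
   Since s_2(2l) = s_2(l) and s_2(2l+1) = s_2(l) + 1, pairing 2l with 2l+1 gives
   T_theta(2a, 2b) = (1 - e(theta)) T_{2 theta}(a, b), and |1 - e(theta)| =
   2 |sin(pi theta)|.  Cutting off at most one term at each end of [a, b) and
   iterating, every such sum of length < 2^lambda is bounded, uniformly in a, by
   B_lambda(theta) = sum_{k < lambda} 2^{k+1} prod_{j < k} |sin(2^j pi theta)|.
   Taking 2^lambda ~ 4z and integrating, the upper bound in the hypothesis gives
   << sum_{k < lambda} (2 rho)^k << (2 rho)^lambda << z^{log_2 (2 rho)}. *)

Definition digsum (K m : nat) : nat := \sum_(i < K) ((m %/ 2 ^ i) %% 2).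

Lemma digsumS K m b : b < 2 -> digsum K.+1 (m.*2 + b) = b + digsum K m.
Proof.
move=> b_lt2; rewrite /digsum big_ord_recl /= expn0 divn1.
congr addn; first by rewrite -muln2 modnMDl modn_small.
apply: eq_bigr => i _; rewrite /bump /= add1n expnS divnMA.
by rewrite -muln2 divnMDl // (divn_small b_lt2) addn0.
Qed.

Lemma digsum_widen K m j : m < 2 ^ K -> digsum (K + j) m = digsum K m.
Proof.
move=> m_lt; elim: j => [|j IHj]; first by rewrite addn0.
rewrite /digsum addnS big_ord_recr /= -/(digsum _ _) IHj.
rewrite divn_small ?mod0n ?addn0 //.
by apply: leq_trans m_lt _; rewrite leq_exp2l // leq_addr.
Qed.

Lemma s2_digsum K m : m < 2 ^ K -> s2 m = digsum K m.
Proof.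
have m_lt : m < 2 ^ m.+1 by apply: ltn_trans (ltn_expl m (isT : 1 < 2)) _; rewrite ltn_exp2l.
move=> m_ltK; rewrite /s2 -/(digsum m.+1 m).
by rewrite -(digsum_widen K m_lt) -(digsum_widen m.+1 m_ltK) addnC.
Qed.

Lemma s2_double_add m b : b < 2 -> s2 (m.*2 + b) = b + s2 m.
Proof.
move=> b_lt2; have m_lt : m < 2 ^ m by exact: ltn_expl.
rewrite (s2_digsum m_lt) (@s2_digsum m.+1) ?digsumS // expnS; lia.
Qed.

Local Open Scope ring_scope.
Local Open Scope classical_set_scope.

Section normc_sum.
Variable R : rcfType.
Import Normc.

Lemma normc_sum_le (I : Type) (r : seq I) (F : I -> R[i]) :
  normc (\sum_(i <- r) F i) <= \sum_(i <- r) normc (F i).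
Proof.
elim: r => [|x r IHr]; first by rewrite !big_nil normc0.
by rewrite !big_cons; apply: le_trans (le_normcD _ _) (lerD (lexx _) IHr).
Qed.

Lemma normc_sign k : normc ((-1) ^+ k : R[i]) = 1.
Proof.
elim: k => [|k IHk]; first by rewrite expr0 normc1.
by rewrite exprS normcM IHk mulr1 /= oppr0 expr0n /= addr0 sqrrN expr1n sqrtr1.
Qed.

End normc_sum.

Section ge0_integral.
Local Open Scope ereal_scope.

(* No measurability is needed: the integral of a nonnegative function is the
   supremum of the integrals of the simple functions below it. *)
Lemma ge0_le_integral_nonmeas d (T : measurableType d) (R : realType)
    (mu : {measure set T -> \bar R}) (D : set T) (f g : T -> \bar R) :
  (forall x, D x -> 0 <= f x) -> (forall x, D x -> f x <= g x) ->
  \int[mu]_(x in D) f x <= \int[mu]_(x in D) g x.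
Proof.
move=> f_ge0 fg; have g_ge0 x : D x -> 0 <= g x.
  by move=> Dx; apply: le_trans (f_ge0 x Dx) (fg x Dx).
rewrite !ge0_integralE //; apply: ereal_sup_le => _ [h hf <-]; exists h => //= x.
apply: le_trans (hf x) _; rewrite /patch; case: ifP => // /[1!inE].
exact: fg.
Qed.

End ge0_integral.

Section thue_morse.
Variable R : realType.
Implicit Types (theta x z : R).
Import Normc.

Lemma e_D (s t : R) : e_ (s + t) = e_ s * e_ t.
Proof. by rewrite /e_ mulrDr cosD sinD /=; congr Complex; ring. Qed.

Lemma normc_e (t : R) : normc (e_ t) = 1.
Proof. by rewrite /e_ /= cos2Dsin2 sqrtr1. Qed.

Lemma normc_1subr_e theta : normc (1 - e_ theta) = 2 * `|sin (pi * theta)|.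
Proof.
rewrite /e_ /= (_ : 2 * pi * theta = pi * theta + pi * theta); last by ring.
rewrite cosD sinD; set c := cos _; set s := sin _.
have -> : (1 - (c * c - s * s)) ^+ 2 + (0 - (s * c + c * s)) ^+ 2 = (2 * s) ^+ 2.
  have cs : c ^+ 2 + s ^+ 2 = 1 by rewrite cos2Dsin2.
  transitivity ((2 * s) ^+ 2 + (1 - (c ^+ 2 + s ^+ 2)) ^+ 2); first by ring.
  by rewrite cs subrr expr0n addr0.
by rewrite sqrtr_sqr normrM ger0_norm.
Qed.

Definition tm_term theta (m : nat) : R[i] := (-1) ^+ s2 m * e_ (m%:R * theta).

Definition tm_sum theta (a b : nat) : R[i] := \sum_(a <= m < b) tm_term theta m.

Lemma normc_tm_sum_le theta a b : normc (tm_sum theta a b) <= (b - a)%:R.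
Proof.
rewrite /tm_sum; apply: le_trans (normc_sum_le _ _) _.
under eq_bigr do rewrite normcM normc_sign normc_e mulr1.
by rewrite sumr_const_nat.
Qed.

Lemma tm_term_pair theta l :
  tm_term theta l.*2 + tm_term theta l.*2.+1 = (1 - e_ theta) * tm_term (2 * theta) l.
Proof.
have s2_even : s2 l.*2 = s2 l by rewrite -[l.*2]addn0 s2_double_add.
have s2_odd : s2 l.*2.+1 = (s2 l).+1 by rewrite -addn1 s2_double_add.
rewrite /tm_term s2_even s2_odd exprS.
rewrite (_ : l.*2.+1%:R * theta = l%:R * (2 * theta) + theta); last first.
  by rewrite -addn1 -muln2 natrD natrM; ring.
rewrite (_ : l.*2%:R * theta = l%:R * (2 * theta)); last first.
  by rewrite -muln2 natrM; ring.
by rewrite e_D; ring.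
Qed.

Lemma tm_sum_double theta n l :
  tm_sum theta n.*2 l.*2 = (1 - e_ theta) * tm_sum (2 * theta) n l.
Proof.
elim: l => [|l IHl]; first by rewrite /tm_sum !big_geq ?mulr0.
have [n_le|l_lt] := leqP n l; last by rewrite /tm_sum !big_geq ?mulr0 ?leq_double.
rewrite /tm_sum doubleS !big_nat_recr //= ?leqW ?leq_double // -!/(tm_sum _ _ _).
by rewrite IHl -addrA tm_term_pair mulrDr.
Qed.

Lemma tm_sum_dyadic_split theta a b : (a < b)%N ->
  tm_sum theta a b = tm_sum theta a (uphalf a).*2
    + (1 - e_ theta) * tm_sum (2 * theta) (uphalf a) b./2
    + tm_sum theta (b./2).*2 b.
Proof.
by move=> a_lt_b; rewrite -tm_sum_double /tm_sum -!big_cat_nat //; lia.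
Qed.

Definition tm_bound (lambda : nat) theta : R :=
  \sum_(k < lambda) 2 ^+ k.+1 * sin_prod k theta.

Lemma sin_prod_ge0 k theta : 0 <= sin_prod k theta.
Proof. exact: prodr_ge0. Qed.

Lemma sin_prodS k theta :
  sin_prod k.+1 theta = `|sin (pi * theta)| * sin_prod k (2 * theta).
Proof.
rewrite /sin_prod big_ord_recl /= expr0 mul1r; congr (_ * _).
by apply: eq_bigr => j _; rewrite /bump /= add1n exprS mulrA [_ * 2]mulrC -!mulrA.
Qed.

Lemma tm_bound_ge0 lambda theta : 0 <= tm_bound lambda theta.
Proof. by apply: sumr_ge0 => k _; rewrite mulr_ge0 ?exprn_ge0 ?sin_prod_ge0. Qed.

Lemma tm_boundS lambda theta :
  tm_bound lambda.+1 theta = 2 + 2 * `|sin (pi * theta)| * tm_bound lambda (2 * theta).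
Proof.
rewrite /tm_bound big_ord_recl /sin_prod big_ord0 mulr1 expr1; congr (_ + _).
rewrite mulr_sumr; apply: eq_bigr => k _.
by rewrite -!/(sin_prod _ _) lift0 sin_prodS !exprS; ring.
Qed.

Lemma normc_tm_sum_le_bound lambda theta a b : (b - a < 2 ^ lambda)%N ->
  normc (tm_sum theta a b) <= tm_bound lambda theta.
Proof.
elim: lambda theta a b => [|lambda IHl] theta a b len_lt.
  by rewrite /tm_sum big_geq ?normc0 ?tm_bound_ge0 //; move: len_lt; rewrite expn0; lia.
have [b_le|a_lt_b] := leqP b a; first by rewrite /tm_sum big_geq ?normc0 ?tm_bound_ge0.
have short a' b' : (b' - a' <= 1)%N -> normc (tm_sum theta a' b') <= 1.
  by move=> len_le; apply: le_trans (normc_tm_sum_le _ _ _) _; rewrite lern1.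
have head := short a (uphalf a).*2 ltac:(lia).
have tail := short (b./2).*2 b ltac:(lia).
have middle : normc (tm_sum (2 * theta) (uphalf a) b./2) <= tm_bound lambda (2 * theta).
  by apply: IHl; move: len_lt; rewrite expnS; lia.
rewrite tm_sum_dyadic_split // tm_boundS.
apply: le_trans (le_normcD _ _) _; apply: le_trans (lerD (le_normcD _ _) (lexx _)) _.
rewrite normcM normc_1subr_e.
have sin_ge0 : 0 <= 2 * `|sin (pi * theta)| by rewrite mulr_ge0.
have := ler_wpM2l sin_ge0 middle; lra.
Qed.

Lemma Thue_Morse_sumE theta x z : 0 <= x -> 0 <= z ->
  Thue_Morse_sum theta x z = tm_sum theta (Num.truncn x).+1 (Num.truncn (x + z)).+1.
Proof.
move=> x_ge0 z_ge0; rewrite /Thue_Morse_sum /tm_sum big_geq_mkord.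
apply: eq_bigl => m; have := ltn_ord m; rewrite ltnS => m_le.
by rewrite -(truncn_lt_nat _ x_ge0) -(truncn_ge_nat _ (addr_ge0 x_ge0 z_ge0)) m_le andbT.
Qed.

Definition dyadic_scale z : nat := (trunc_log 2 (Num.truncn z)).+2.

Lemma cmod_Thue_Morse_sum_le theta x z : 0 <= x -> 1 <= z ->
  cmod (Thue_Morse_sum theta x z) <= tm_bound (dyadic_scale z) theta.
Proof.
move=> x_ge0 z_ge1; rewrite /cmod Thue_Morse_sumE //; last lra.
apply: normc_tm_sum_le_bound.
have trunc_add : (Num.truncn (x + z) <= (Num.truncn x + Num.truncn z).+1)%N.
  rewrite truncn_le_nat -!natr1.
  by have := truncnS_gt x; have := truncnS_gt z; rewrite -!natr1; lra.
have := @trunc_log_ltn 2 (Num.truncn z) isT.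
by rewrite /dyadic_scale !expnS; lia.
Qed.

Lemma sup_abs_sum_le z theta : 1 <= z ->
  (sup_abs_sum z theta <= (tm_bound (dyadic_scale z) theta)%:E)%E.
Proof.
move=> z_ge1; apply: ge_ereal_sup => _ [x x_ge0 <-].
by rewrite lee_fin cmod_Thue_Morse_sum_le.
Qed.

Lemma sup_abs_sum_ge0 z theta : (0 <= sup_abs_sum z theta)%E.
Proof.
apply: le_ereal_sup_tmp; exists (cmod (Thue_Morse_sum theta 0 z))%:E.
  by exists 0 => //=.
by rewrite lee_fin /cmod; case: (Thue_Morse_sum theta 0 z) => ? ?; exact: sqrtr_ge0.
Qed.

Local Notation mu := (@lebesgue_measure R).

Lemma measurable_sin_prod (D : set R) k : measurable_fun D (sin_prod k).
Proof.
apply: measurable_prod => j _; apply: measurable_funTS.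
apply: measurableT_comp; first exact: normr_measurable.
apply: measurableT_comp; first exact: continuous_measurable_fun (@continuous_sin R).
exact: measurable_funM.
Qed.

Lemma integral_tm_bound lambda :
  (\int[mu]_(theta in `[0%R, 1%R]) (tm_bound lambda theta)%:E =
  \sum_(k < lambda) (2 ^+ k.+1)%:E * \int[mu]_(theta in `[0%R, 1%R]) (sin_prod k theta)%:E)%E.
Proof.
under eq_integral do rewrite /tm_bound -sumEFin.
rewrite ge0_integral_sum //; last 2 first.
- by move=> k; apply/measurable_EFinP/measurable_funM => //; exact: measurable_sin_prod.
- by move=> k theta _; rewrite lee_fin mulr_ge0 ?exprn_ge0 ?sin_prod_ge0.
apply: eq_bigr => k _; under eq_integral do rewrite EFinM.
rewrite ge0_integralZl_EFin ?exprn_ge0 //.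
- by move=> theta _; rewrite lee_fin sin_prod_ge0.
- by apply/measurable_EFinP; exact: measurable_sin_prod.
Qed.

Lemma integral_tm_bound_le (rho c : R) lambda :
  (forall k, \int[mu]_(theta in `[0%R, 1%R]) (sin_prod k theta)%:E <= (c * rho ^+ k)%:E)%E ->
  (\int[mu]_(theta in `[0%R, 1%R]) (tm_bound lambda theta)%:E <=
    (2 * c * \sum_(k < lambda) (2 * rho) ^+ k)%:E)%E.
Proof.
move=> int_sin_prod; rewrite integral_tm_bound mulr_sumr -sumEFin.
apply: lee_sum => k _.
have -> : 2 * c * (2 * rho) ^+ k = 2 ^+ k.+1 * (c * rho ^+ k) by rewrite exprMn exprS; ring.
by rewrite EFinM lee_wpmul2l ?lee_fin ?exprn_ge0.
Qed.

Lemma geometric_sum_le (q : R) n : 1 < q -> \sum_(k < n) q ^+ k <= q ^+ n / (q - 1).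
Proof.
by move=> q_gt1; rewrite ler_pdivlMr ?subr_gt0 // mulrC -subrX1 gerBl.
Qed.

Lemma log2_mul2 (r : R) : 0 < r -> 1 + ln r / ln 2 = ln (2 * r) / ln 2.
Proof.
move=> r_gt0; have ln2_gt0 : 0 < ln (2 : R) by apply: ln_gt0; lra.
by rewrite lnM ?posrE // mulrDl divff ?gt_eqF.
Qed.

Lemma powR_log2_mul2 (r : R) : 0 < r -> 2 `^ (1 + ln r / ln 2) = 2 * r.
Proof.
move=> r_gt0; have ln2_gt0 : 0 < ln (2 : R) by apply: ln_gt0; lra.
rewrite log2_mul2 // /powR gt_eqF // mulfVK ?gt_eqF //.
by rewrite lnK // posrE mulr_gt0.
Qed.

Lemma exprn_dyadic_scale_le (rho z : R) : 0 < rho -> 1 < 2 * rho -> 1 <= z ->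
  (2 * rho) ^+ dyadic_scale z <= (2 * rho) ^+ 2 * z `^ (1 + ln rho / ln 2).
Proof.
move=> rho_gt0 q_gt1 z_ge1; set a := 1 + ln rho / ln 2.
have a_ge0 : 0 <= a.
  rewrite /a log2_mul2 // divr_ge0 // ?ln_ge0; lra.
have trunc_gt0 : (0 < Num.truncn z)%N by rewrite truncn_gt0.
have pow2_le : (2 ^ trunc_log 2 (Num.truncn z))%:R <= z.
  apply: le_trans (_ : (Num.truncn z)%:R <= z); last by rewrite truncn_le; lra.
  by rewrite ler_nat trunc_logP.
have q_gt0 : 0 < 2 * rho by lra.
rewrite /dyadic_scale -[(trunc_log _ _).+2]addn2 exprD [leLHS]mulrC ler_pM2l ?exprn_gt0 //.
rewrite -powR_log2_mul2 // -powR_mulrn ?powR_ge0 // -powRrM mulrC powRrM powR_mulrn //.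
by rewrite -natrX -/a ge0_ler_powR ?nnegrE ?ler0n //; lra.
Qed.

End thue_morse.

Theorem proposition2 (R : realType) (rho : R) :
  6543 / 10000 < rho < 6632 / 10000 ->
  (exists c1 c2 : R, 0 < c1 /\ 0 < c2 /\
     forall lambda : nat,
       ((c1 * rho ^+ lambda)%:E <=
          \int[@lebesgue_measure R]_(theta in `[0%R, 1%R]) (sin_prod lambda theta)%:E)%E /\
       (\int[@lebesgue_measure R]_(theta in `[0%R, 1%R]) (sin_prod lambda theta)%:E <=
          (c2 * rho ^+ lambda)%:E)%E) ->
  exists C : R, 0 < C /\
    forall z : R, 1 <= z ->
      (\int[@lebesgue_measure R]_(theta in `[0%R, 1%R]) sup_abs_sum z theta <=
         (C * z `^ (1 + ln rho / ln 2))%:E)%E.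
Proof.
move=> /andP[rho_gt _] [? [c2 [_ [c2_gt0 int_sin_prod]]]].
have rho_gt0 : 0 < rho by lra.
set q := 2 * rho; have q_gt1 : 1 < q by rewrite /q; lra.
exists (2 * c2 * q ^+ 2 / (q - 1)); split.
  by rewrite divr_gt0 ?subr_gt0 // !mulr_gt0 // exprn_gt0 //; lra.
move=> z z_ge1.
apply: (le_trans (ge0_le_integral_nonmeas (@lebesgue_measure R)
  (fun theta _ => sup_abs_sum_ge0 z theta) (fun theta _ => sup_abs_sum_le theta z_ge1))).
apply: (le_trans (integral_tm_bound_le _ (fun k => (int_sin_prod k).2))).
have sum_le : \sum_(k < dyadic_scale z) q ^+ k <= q ^+ 2 * z `^ (1 + ln rho / ln 2) / (q - 1).
  apply: le_trans (geometric_sum_le _ q_gt1) _.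
  by rewrite ler_pM2r ?invr_gt0 ?subr_gt0 // exprn_dyadic_scale_le.
rewrite lee_fin -/q; apply: le_trans (ler_wpM2l _ sum_le) _; first by rewrite mulr_ge0 // ltW.
by rewrite !mulrA mulrAC.
Qed.
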